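(* Let $\mathfrak{D}=[a,b]=\prod_{i=1}^d [a_i,b_i]\subseteq\mathbb{R}^d$ with $a_i<b_i$, and let $n_0\ge 1$ and $t\ge 1$ be integers. Consider a stochastic algorithm which, at each iteration $n\ge n_0$, generates random candidate points $Y_{n,1},\dots,Y_{n,t}\in\mathfrak{D}$ as follows. Let $\mathcal{E}_{n-1}$ denote the collection of all random vectors generated before iteration $n$, and $\sigma(\mathcal{E}_{n-1})$ the $\sigma$-field they generate; the current best point $x_n^*\in\mathfrak{D}$ is $\sigma(\mathcal{E}_{n-1})$-measurable. For each $j=1,\dots,t$ and each coordinate $i=1,\dots,d$, conditionally on $\sigma(\mathcal{E}_{n-1})$ and independently over $i$: with probability $P_{n,i}$ the coordinate is perturbed, i.e. $\tilde Y_{n,j,i}=x^*_{n,i}+Z_{n,j,i}$, where $Z_{n,j,i}$ has a continuous (conditional) probability density $F_{n,j,i}$ on $\mathbb{R}$; otherwise $\tilde Y_{n,j,i}=x^*_{n,i}$. If $\tilde Y_{n,j}\notin\mathfrak{D}$ it is replaced by a point of $\mathfrak{D}$ (e.g. the nearest point in $\mathfrak{D}$), and $Y_{n,j}$ is the resulting point; if $\tilde Y_{n,j}\in\mathfrak{D}$ then $Y_{n,j}=\tilde Y_{n,j}$. Here $P_{n,i}$ and $F_{n,j,i}$ may depend on $\sigma(\mathcal{E}_{n-1})$. Suppose there exist constants $C_1>0$ and $C_2>0$ such that for every $n\ge n_0$, every $1\le i\le d$ and every $j=1,\dots,t$, we have $P_{n,i}>C_1$ and $F_{n,j,i}(z)>C_2$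 for all $z\in[-(b_i-a_i),\,b_i-a_i]$. Then the following condition holds: for every $j=1,\dots,t$, every $x\in\mathfrak{D}$ and every $\delta>0$ there exists $\nu_j(x,\delta)>0$ such that $$P\big[Y_{n,j}\in B(x,\delta)\cap\mathfrak{D}\ \big|\ \sigma(\mathcal{E}_{n-1})\big]\ge \nu_j(x,\delta)\quad\text{almost surely, for all } n\ge n_0,$$ where $B(x,\delta)$ is the open Euclidean ball of radius $\delta$ centered at $x$.
   Context: This is the candidate-point generation step of a stochastic response-surface global optimization method on the box $\mathfrak{D}$; the candidate points are perturbations of the current best point $x_n^*$ in a random subset of coordinates. The conclusion is the condition (called Condition [2] in the paper) under which such methods converge to the global minimum almost surely. *)

From HB Require Import structures.
From mathcomp Require Import all_boot all_order all_algebra.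
From mathcomp Require Import all_classical all_reals all_analysis measurable_realfun.
Set Implicit Arguments. Unset Strict Implicit. Unset Printing Implicit Defensive.
Import Order.TTheory GRing.Theory Num.Theory.
Import numFieldNormedType.Exports.
Local Open Scope classical_set_scope.
Local Open Scope ring_scope.

Section Defs.
Variable R : realType.

Definition box (d : nat) (a b : 'I_d -> R) : set ('I_d -> R) :=
  [set y | forall i, a i <= y i <= b i].

Definition eball (d : nat) (x : 'I_d -> R) (delta : R) : set ('I_d -> R) :=
  [set y | \sum_(i < d) (y i - x i) ^+ 2 < delta ^+ 2].

Variables (dO : measure_display) (Omega : measurableType dO).

Definition sub_sigma (G : set (set Omega)) : Prop :=
  sigma_algebra setT G /\ G `<=` measurable.

Definition Gmeas (G : set (set Omega)) (h : Omega -> R) : Prop :=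
  forall S : set R, measurable S -> G (h @^-1` S).
Definition Gmeas_e (G : set (set Omega)) (h : Omega -> \bar R) : Prop :=
  forall S : set (\bar R), measurable S -> G (h @^-1` S).

Definition cond_prob_version (P : probability Omega R) (G : set (set Omega))
    (A : set Omega) (Q : Omega -> R) : Prop :=
  Gmeas G Q /\
  forall G0, G G0 -> (\int[P]_(w in G0) (Q w)%:E = P (A `&` G0))%E.

(* Conditionally on G, the pairs (B_i, Z_i), i < d, are independent, B_i is
   Bernoulli(p_i) and independent of Z_i, and Z_i has density f_i:
   the conditional joint law on all measurable rectangles. *)
Definition cond_law (d : nat) (P : probability Omega R) (G : set (set Omega))
    (p : 'I_d -> Omega -> R) (f : 'I_d -> Omega -> R -> R)
    (B : 'I_d -> Omega -> bool) (Z : 'I_d -> Omega -> R) : Prop :=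
  forall (A : set Omega) (s : 'I_d -> bool) (S : 'I_d -> set R),
    G A -> (forall i, measurable (S i)) ->
    P [set w | A w /\ forall i, B i w = s i /\ S i (Z i w)] =
    (\int[P]_(w in A)
       \prod_(i < d) ((if s i then p i w else 1 - p i w)%:E *
                      \int[lebesgue_measure]_(z in S i) (f i w z)%:E))%E.

End Defs.

From HB Require Import structures.
From mathcomp Require Import all_boot all_order all_algebra.
From mathcomp Require Import all_classical all_reals all_analysis measurable_realfun.
From mathcomp Require Import lra.
Import Order.TTheory GRing.Theory Num.Theory.
Import numFieldNormedType.Exports.
Local Open Scope classical_set_scope.
Local Open Scope ring_scope.

(* The conditional law of the
   perturbations is only known on deterministic windows, while the best point
   x*_n is random, so cover the box by finitely many G-measurable grid cells of
   width h on which x*_n is known up to h. On a cell, fix for each coordinate a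
   window of length h for Z_i such that x*_n + Z lands in a cube of side 2h inside
   both the box and B(x, delta); there no projection happens and Y = x*_n + Z.
   Perturbing every coordinate with Z_i in its window has conditional probability
   at least c = (C1 C2 h)^d, so c P(A) <= P(Y hits, A) for every G-measurable A
   inside a cell, and a version Q of the conditional probability is then >= c/2
   almost surely. *)

Section sigma_algebra_closure.
Context {T : pointedType} {G : set (set T)}.
Hypothesis sG : sigma_algebra setT G.

Lemma sigma_algebra_setI : setI_closed G.
Proof.
by move=> A B; rewrite -(measurable_g_measurableTypeE sG); exact: measurableI.
Qed.

Lemma sigma_algebra_fin_bigcap (I : finType) (F : I -> set T) :
  (forall i, G (F i)) -> G (\bigcap_i F i).
Proof.
rewrite -(measurable_g_measurableTypeE sG) => GF.
by apply: fin_bigcap_measurable; [exact: finite_finset | move=> i _; exact: GF].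
Qed.

End sigma_algebra_closure.

Section sub_sigma_measurable.
Context {R : realType} {dO : measure_display} {Omega : measurableType dO}.
Context {G : set (set Omega)}.
Hypothesis sG : sub_sigma G.

Lemma Gmeas_measurable_fun {D : set Omega} {h : Omega -> R} :
  Gmeas G h -> measurable_fun D h.
Proof. by move=> Gh mD S mS; apply: measurableI => //; exact/sG.2/Gh. Qed.

Lemma Gmeas_e_measurable_fun {D : set Omega} {h : Omega -> \bar R} :
  Gmeas_e G h -> measurable_fun D h.
Proof. by move=> Gh mD S mS; apply: measurableI => //; exact/sG.2/Gh. Qed.

End sub_sigma_measurable.

Section ereal_bounds.
Context {R : realType}.
Local Open Scope ereal_scope.

Lemma emeasurable_fun_prod {dT : measure_display} {T : measurableType dT}
    (D : set T) (I : Type) (s : seq I) (g : I -> T -> \bar R) :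
  (forall i, measurable_fun D (g i)) ->
  measurable_fun D (fun w => \prod_(i <- s) g i w).
Proof.
move=> mg; elim: s => [|i s IH].
  by under eq_fun do rewrite big_nil; exact: measurable_cst.
by under eq_fun do rewrite big_cons; exact: emeasurable_funM.
Qed.

Lemma lee_prod (I : Type) (s : seq I) (f g : I -> \bar R) :
  (forall i, 0 <= f i) -> (forall i, f i <= g i) ->
  \prod_(i <- s) f i <= \prod_(i <- s) g i.
Proof.
move=> f0 fg; elim: s => [|i s IH]; first by rewrite !big_nil.
by rewrite !big_cons; apply: lee_pmul => //; exact: prode_ge0.
Qed.

Lemma integral_ge_cst {dT : measure_display} {T : measurableType dT}
    (mu : {measure set T -> \bar R}) (S : set T) (g : T -> R) (C : R) :
  measurable S -> measurable_fun S g -> (0 <= C)%R ->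
  (forall z, S z -> (C <= g z)%R) ->
  C%:E * mu S <= \int[mu]_(z in S) (g z)%:E.
Proof.
move=> mS mg C0 Cg; rewrite -integral_cst //.
by apply: ge0_le_integral => //; exact/measurable_EFinP.
Qed.

End ereal_bounds.

Section conditional_bounds.
Context {R : realType} {dO : measure_display} {Omega : measurableType dO}.
Context {P : probability Omega R} {G : set (set Omega)}.
Hypothesis sG : sub_sigma G.
Local Open Scope ereal_scope.

Lemma cond_law_all_perturbed_ge {d : nat} {p : 'I_d -> Omega -> R}
    {f : 'I_d -> Omega -> R -> R} {B : 'I_d -> Omega -> bool}
    {Z : 'I_d -> Omega -> R} {A : set Omega} (S : 'I_d -> set R) (c : R) :
  (forall i, Gmeas G (p i)) ->
  (forall i (S : set R), measurable S ->
     Gmeas_e G (fun w => \int[lebesgue_measure]_(z in S) (f i w z)%:E)) ->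
  cond_law P G p f B Z -> G A -> (forall i, measurable (S i)) -> (0 <= c)%R ->
  (forall w, A w -> forall i,
     c%:E <= (p i w)%:E * \int[lebesgue_measure]_(z in S i) (f i w z)%:E) ->
  (c ^+ d)%:E * P A <= P [set w | A w /\ forall i, B i w = true /\ S i (Z i w)].
Proof.
move=> Gp Gf law GA mS c0 cA; have mA := sG.2 _ GA.
rewrite (law A (fun=> true) S GA mS) -integral_cst //.
apply: ge0_le_integral => //.
- by move=> w _; rewrite lee_fin exprn_ge0.
- apply: emeasurable_fun_prod => i; apply: emeasurable_funM.
    exact/measurable_EFinP/(Gmeas_measurable_fun sG).
  exact/(Gmeas_e_measurable_fun sG)/Gf.
move=> w Aw; rewrite /=.
have -> : (c ^+ d = \prod_(i < d) c)%R by rewrite prodr_const card_ord.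
rewrite -prodEFin.
by apply: lee_prod => [i|i]; [rewrite lee_fin | exact: cA].
Qed.

(* On N := {Q < nu} `&` C, c P(N) <= P(E `&` N) = \int_N Q <= nu P(N). *)
Lemma cond_prob_null_below {E C : set Omega} {Q : Omega -> R} {c nu : R} :
  cond_prob_version P G E Q -> G C -> (0 <= nu < c)%R ->
  (forall A, G A -> A `<=` C -> c%:E * P A <= P (E `&` A)) ->
  P (Q @^-1` `]-oo, nu[ `&` C) = 0.
Proof.
move=> [GQ intQ] GC /andP[nu0 nuc] massC.
set N := _ `&` C.
have GN : G N.
  by apply: (sigma_algebra_setI sG.1 _ _ _ GC); apply: GQ; exact: measurable_itv.
have mN := sG.2 _ GN.
have mQ : measurable_fun N Q := Gmeas_measurable_fun sG GQ.
have int_le : \int[P]_(w in N) (Q w)%:E <= nu%:E * P N.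
  rewrite integralE -integral_cst //.
  apply: (@le_trans _ _ (\int[P]_(w in N) (fun w => (Q w)%:E)^\+ w)).
    rewrite -[leRHS]sube0; apply: leeB => //.
    by apply: integral_ge0 => w _; exact: funeneg_ge0.
  apply: ge0_le_integral => //; first exact/measurable_funepos/measurable_EFinP.
  move=> w [/= Qnu _]; rewrite funeposE /= ge_max !lee_fin nu0 andbT.
  by rewrite in_itv /= in Qnu; exact: ltW.
have := massC N GN (@subIsetr _ _ _).
rewrite -(intQ _ GN) => /le_trans/(_ int_le).
have PNE := fineK (fin_num_measure P _ mN).
rewrite -PNE -!EFinM lee_fin => cnu.
have PN0 : (0 <= fine (P N))%R by rewrite fine_ge0.
by rewrite -PNE; congr EFin; nra.
Qed.

Lemma cond_prob_ae_ge {E : set Omega} {Q : Omega -> R} (c : R) {nu : R}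
    {K : finType} (cell : K -> set Omega) :
  cond_prob_version P G E Q -> (0 <= nu < c)%R ->
  (forall k, G (cell k)) -> (forall w, exists k, cell k w) ->
  (forall k A, G A -> A `<=` cell k -> c%:E * P A <= P (E `&` A)) ->
  {ae P, forall w, (nu <= Q w)%R}.
Proof.
move=> QE nuc Gcell cover mass.
pose N k := Q @^-1` `]-oo, nu[ `&` cell k.
have negN : P.-negligible (\big[setU/set0]_k N k).
  elim/big_ind: _ => [|? ? ? ?|k _].
  - exact: negligible_set0.
  - exact: negligibleU.
  exists (N k); split => //.
    apply/sG.2/(sigma_algebra_setI sG.1 _ _ _ (Gcell k)).
    by apply: QE.1; exact: measurable_itv.
  exact: cond_prob_null_below QE (Gcell k) nuc (mass k).
apply: negligibleS negN => w /= /negP; rewrite -ltNge => Qnu.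
have [k ck] := cover w.
by rewrite (bigD1 k) //=; left; split => //; rewrite /= in_itv.
Qed.

End conditional_bounds.

Section box_geometry.
Context {R : realType} {d : nat}.
Implicit Types (a b x y : 'I_d -> R) (delta L : R).

Definition target_side a b delta : R :=
  \big[Order.min/(delta / (d%:R + 1))]_i (b i - a i).

Lemma target_side_gt0 a b delta :
  (forall i, a i < b i) -> 0 < delta -> 0 < target_side a b delta.
Proof.
move=> ab delta0; apply: lt_bigmin => [|i _]; last by rewrite subr_gt0.
by rewrite divr_gt0 // ltr_wpDl.
Qed.

Lemma target_side_le_width a b delta i : target_side a b delta <= b i - a i.
Proof. exact: bigmin_le. Qed.

Lemma target_side_le_delta a b delta :
  (d%:R + 1) * target_side a b delta <= delta.
Proof. by rewrite mulrC -ler_pdivlMr ?ltr_wpDl //; exact: bigmin_le_id. Qed.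

Lemma eball_of_coord_near {x y delta L} :
  0 < L -> (d%:R + 1) * L <= delta -> (forall i, `|y i - x i| <= L) ->
  eball x delta y.
Proof.
move=> L0 Ldelta near; rewrite /eball /=.
apply: (@le_lt_trans _ _ (\sum_(i < d) L ^+ 2)).
  by apply: ler_sum => i _; have := near i; rewrite ler_norml => /andP[]; nra.
rewrite sumr_const card_ord -mulr_natr.
have d0 : 0 <= d%:R :> R by [].
have dL0 : 0 <= (d%:R + 1) * L by rewrite mulr_ge0 ?addr_ge0 // ltW.
have := ler_pM dL0 dL0 Ldelta Ldelta.
nra.
Qed.

Definition target_lo x b L i : R := Order.min (x i) (b i - L).

Lemma target_lo_in_box {a b x L i} {z : R} : box a b x -> L <= b i - a i ->
  target_lo x b L i <= z <= target_lo x b L i + L -> a i <= z <= b i.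
Proof.
move=> /(_ i) /andP[axi xbi] Lab; rewrite /target_lo.
by have [xL|xL] := leP (x i) (b i - L) => /andP[]; lra.
Qed.

Lemma target_lo_near {a b x L i} {z : R} : box a b x ->
  target_lo x b L i <= z <= target_lo x b L i + L -> `|z - x i| <= L.
Proof.
move=> /(_ i) /andP[axi xbi]; rewrite /target_lo ler_norml.
by have [xL|xL] := leP (x i) (b i - L) => /andP[] *; apply/andP; split; lra.
Qed.

Lemma exists_nat_gt {I : finType} (g : I -> R) :
  exists M : nat, forall i, g i < M%:R.
Proof.
set m := \big[Order.max/0]_i g i.
have m0 : 0 <= m by exact: bigmax_ge_id.
exists (Num.truncn m).+1 => i; apply: le_lt_trans (le_bigmax 0 g i) _.
by have /andP[] := truncn_itv m0.
Qed.

Lemma box_grid_cover {a b y} {h : R} {M : nat} :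
  0 < h -> (forall i, (b i - a i) / h < M%:R) -> box a b y ->
  exists k : {ffun 'I_d -> 'I_M}, forall i,
    a i + (k i)%:R * h <= y i <= a i + (k i)%:R * h + h.
Proof.
move=> h0 abM yab.
have y0 i : 0 <= (y i - a i) / h.
  by have /andP[ay _] := yab i; rewrite divr_ge0 ?subr_ge0 // ltW.
have kM i : (Num.truncn ((y i - a i) / h) < M)%N.
  rewrite truncn_lt_nat // (le_lt_trans _ (abM i)) // ler_pM2r ?invr_gt0 //.
  by have /andP[_ yb] := yab i; lra.
exists [ffun i => Ordinal (kM i)] => i; rewrite ffunE /=.
have /andP[tq qt] := truncn_itv (y0 i); move: tq qt.
set q := (y i - a i) / h; set t := (Num.truncn q)%:R.
have qh : q * h = y i - a i by rewrite divfK ?gt_eqF.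
rewrite -natr1 -/t => tq qt; apply/andP; split; nra.
Qed.

End box_geometry.

Definition perturb_mass {R : realType} {d : nat} (a b : 'I_d -> R)
    (C1 C2 delta : R) : R :=
  (C1 * (C2 * (target_side a b delta / 2))) ^+ d.

Lemma perturb_mass_gt0 {R : realType} {d : nat} (a b : 'I_d -> R)
    (C1 C2 delta : R) :
  (forall i, a i < b i) -> 0 < delta -> 0 < C1 -> 0 < C2 ->
  0 < perturb_mass a b C1 C2 delta.
Proof.
move=> ab delta0 C10 C20.
by rewrite exprn_gt0 // !mulr_gt0 ?invr_gt0 // target_side_gt0.
Qed.

Section one_iteration.
Context {R : realType} {dO : measure_display} {Omega : measurableType dO}.
Context {P : probability Omega R} {G : set (set Omega)}.
Context {d : nat} {a b : 'I_d -> R}.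
Context {xs p : 'I_d -> Omega -> R} {f : 'I_d -> Omega -> R -> R}.
Context {B : 'I_d -> Omega -> bool} {Z Y : 'I_d -> Omega -> R} {C1 C2 : R}.
Hypothesis ab : forall i, a i < b i.
Hypothesis sG : sub_sigma G.
Hypothesis Gxs : forall i, Gmeas G (xs i).
Hypothesis xs_box : forall w, box a b (fun i => xs i w).
Hypothesis Gp : forall i, Gmeas G (p i).
Hypothesis f_cont : forall i w, continuous (f i w).
Hypothesis Gf : forall i (S : set R), measurable S ->
  Gmeas_e G (fun w => \int[lebesgue_measure]_(z in S) (f i w z)%:E)%E.
Hypothesis mB : forall i, measurable [set w | B i w].
Hypothesis mZ : forall i, measurable_fun setT (Z i).
Hypothesis law : cond_law P G p f B Z.
Hypothesis mY : forall i, measurable_fun setT (Y i).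
Hypothesis Y_box : forall w, box a b (fun i => Y i w).
Hypothesis Y_eq : forall w,
  box a b (fun i => xs i w + (if B i w then Z i w else 0)) ->
  forall i, Y i w = xs i w + (if B i w then Z i w else 0).
Hypotheses (C1_gt0 : 0 < C1) (C2_gt0 : 0 < C2).
Hypothesis p_gt : forall i w, C1 < p i w.
Hypothesis f_gt : forall i w z, - (b i - a i) <= z <= b i - a i -> C2 < f i w z.
Context {x : 'I_d -> R} {delta : R}.
Hypotheses (x_box : box a b x) (delta_gt0 : 0 < delta).

Let L := target_side a b delta.
Let h := L / 2.
Let lo (k : 'I_d -> nat) i := a i + (k i)%:R * h.

Let L_gt0 : 0 < L. Proof. exact: target_side_gt0. Qed.
Let h_gt0 : 0 < h. Proof. by rewrite divr_gt0. Qed.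

Definition grid_cell (k : 'I_d -> nat) : set Omega :=
  \bigcap_i (xs i @^-1` `[lo k i, lo k i + h]).

Definition perturb_window (k : 'I_d -> nat) i : set R :=
  [set` `[target_lo x b L i - lo k i, target_lo x b L i - lo k i + h]].

Definition target_event : set Omega :=
  [set w | eball x delta (fun i => Y i w) /\ box a b (fun i => Y i w)].

Definition hit_event (A : set Omega) k : set Omega :=
  [set w | A w /\ forall i, B i w = true /\ perturb_window k i (Z i w)].

Lemma G_grid_cell k : G (grid_cell k).
Proof.
by apply: (sigma_algebra_fin_bigcap sG.1) => i; apply: Gxs; exact: measurable_itv.
Qed.

Lemma perturb_window_target {k w i z} :
  grid_cell k w -> perturb_window k i z ->
  target_lo x b L i <= xs i w + z <= target_lo x b L i + L.
Proof.
move=> /(_ i I); rewrite /perturb_window /= !in_itv /=.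
move=> /andP[lox xhi] /andP[zlo zhi].
have hh : L = h + h by rewrite /h -splitr.
by apply/andP; split; lra.
Qed.

Lemma perturb_window_within_width {k w i z} :
  grid_cell k w -> perturb_window k i z ->
  - (b i - a i) <= z <= b i - a i.
Proof.
move=> cw /(perturb_window_target cw).
move=> /(target_lo_in_box x_box (target_side_le_width _ _ _ _)).
by have /andP[] := xs_box w i; move=> ? ? /andP[] *; apply/andP; split; lra.
Qed.

Lemma hit_event_sub_target A k :
  A `<=` grid_cell k -> hit_event A k `<=` target_event `&` A.
Proof.
move=> Acell w [Aw hitw].
have target i := perturb_window_target (Acell w Aw) (hitw i).2.
have YE i : Y i w = xs i w + Z i w.
  have [Bi _] := hitw i; rewrite Y_eq ?Bi // => i' /=.
  have [Bi' _] := hitw i'; rewrite Bi'.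
  exact: target_lo_in_box x_box (target_side_le_width _ _ _ _) (target i').
split => //; split => //.
apply: (eball_of_coord_near L_gt0 (target_side_le_delta _ _ _)) => i; rewrite YE.
exact: target_lo_near x_box (target i).
Qed.

Lemma measurable_target_event : measurable target_event.
Proof.
have -> : target_event =
    (fun w => \sum_(i < d) (Y i w - x i) ^+ 2) @^-1` `]-oo, delta ^+ 2[
    `&` \bigcap_i (Y i @^-1` `[a i, b i]).
  apply/seteqP; split => w /= [ballw boxw]; split.
  - by rewrite /= in_itv.
  - by move=> i _; rewrite /= in_itv; exact: boxw.
  - by move: ballw; rewrite /= in_itv.
  - by move=> i; have := boxw i I; rewrite /= in_itv.
apply: measurableI.
  rewrite -[X in measurable X]setTI; apply: measurable_sum => // i.
  by apply/measurable_funX/measurable_funB => //; exact: measurable_cst.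
apply: fin_bigcap_measurable => [|i _]; first exact: finite_finset.
by rewrite -[X in measurable X]setTI; apply: mY => //; exact: measurable_itv.
Qed.

Lemma measurable_hit_event A k : G A -> measurable (hit_event A k).
Proof.
move=> GA; have -> : hit_event A k =
    A `&` \bigcap_i ([set w | B i w] `&` Z i @^-1` perturb_window k i).
  apply/seteqP; split => w [Aw hitw]; split => // i.
    by move=> _; have [] := hitw i.
  by have [] := hitw i I.
apply: measurableI; first exact: sG.2.
apply: fin_bigcap_measurable => [|i _]; first exact: finite_finset.
apply: measurableI => //; rewrite -[X in measurable X]setTI.
by apply: mZ => //; exact: measurable_itv.
Qed.

Lemma hit_event_prob_ge {A k} : G A -> A `<=` grid_cell k ->
  ((perturb_mass a b C1 C2 delta)%:E * P A <= P (hit_event A k))%E.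
Proof.
move=> GA Acell.
apply: (cond_law_all_perturbed_ge sG (perturb_window k) (C1 * (C2 * h))
  Gp Gf law GA).
- by move=> i; exact: measurable_itv.
- by rewrite !mulr_ge0 // ltW.
move=> w Aw i; rewrite EFinM; apply: lee_pmul; rewrite ?lee_fin.
- exact: ltW.
- exact/ltW/mulr_gt0.
- exact/ltW/p_gt.
have -> : (C2 * h)%:E = (C2%:E * lebesgue_measure (perturb_window k i))%E.
  rewrite lebesgue_measure_itv /= lte_fin ltrDl h_gt0 -EFinM.
  by congr (_ * _)%:E; lra.
apply: integral_ge_cst => [|||z].
- exact: measurable_itv.
- exact: measurable_funS measurableT (@subsetT _ _) (continuous_measurable_fun _).
- exact: ltW.
by move=> /(perturb_window_within_width (Acell w Aw)) /f_gt/ltW.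
Qed.

Theorem target_event_cond_prob_ge (Q : Omega -> R) :
  cond_prob_version P G target_event Q ->
  {ae P, forall w, perturb_mass a b C1 C2 delta / 2 <= Q w}.
Proof.
move=> QE.
have [M widthM] := exists_nat_gt (fun i => (b i - a i) / h).
have c_gt0 : 0 < perturb_mass a b C1 C2 delta by exact: perturb_mass_gt0.
apply: (cond_prob_ae_ge sG (perturb_mass a b C1 C2 delta)
  (fun k : {ffun 'I_d -> 'I_M} => grid_cell (fun i => k i)) QE).
- by rewrite divr_ge0 ?ltW //= ltr_pdivrMr // ltr_pMr // ltr1n.
- by move=> k; exact: G_grid_cell.
- move=> w; have [k kw] := box_grid_cover h_gt0 widthM (xs_box w).
  by exists k => i _; rewrite /= in_itv; exact: kw.
move=> k A GA Acell; apply: le_trans (hit_event_prob_ge GA Acell) _.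
apply: le_measure; rewrite ?inE.
- exact: measurable_hit_event.
- by apply: measurableI => //; [exact: measurable_target_event | exact: sG.2].
- exact: hit_event_sub_target.
Qed.

End one_iteration.

Theorem proposition1 (R : realType) (d t n0 : nat) (a b : 'I_d -> R)
  (dO : measure_display) (Omega : measurableType dO) (P : probability Omega R)
  (G : nat -> set (set Omega))
  (xs : nat -> 'I_d -> Omega -> R)
  (p : nat -> 'I_d -> Omega -> R)
  (f : nat -> 'I_t -> 'I_d -> Omega -> R -> R)
  (B : nat -> 'I_t -> 'I_d -> Omega -> bool)
  (Z : nat -> 'I_t -> 'I_d -> Omega -> R)
  (Y : nat -> 'I_t -> 'I_d -> Omega -> R)
  (C1 C2 : R) :
  (forall i, a i < b i) -> (1 <= n0)%N -> (1 <= t)%N ->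
  (* structure of the algorithm at every iteration n >= n0 *)
  (forall n, (n0 <= n)%N ->
     [/\ sub_sigma (G n),
         (forall i, Gmeas (G n) (xs n i)),
         (forall w, box a b (fun i => xs n i w)),
         (forall i, Gmeas (G n) (p n i) /\ forall w, 0 <= p n i w <= 1) &
         forall j : 'I_t,
         [/\ forall i w, continuous (f n j i w) /\ (forall z, 0 <= f n j i w z) /\
               (\int[lebesgue_measure]_z (f n j i w z)%:E = 1)%E,
             forall i (S : set R), measurable S ->
               Gmeas_e (G n) (fun w => \int[lebesgue_measure]_(z in S) (f n j i w z)%:E)%E,
             forall i, measurable [set w | B n j i w] /\ measurable_fun setT (Z n j i),
             cond_law P (G n) (p n) (f n j) (B n j) (Z n j) &
             forall i, measurable_fun setT (Y n j i) /\
             forall w,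
               box a b (fun i => Y n j i w) /\
               (box a b (fun i => xs n i w + (if B n j i w then Z n j i w else 0)) ->
                forall i, Y n j i w = xs n i w + (if B n j i w then Z n j i w else 0))]]) ->
  (* the lower bounds *)
  0 < C1 -> 0 < C2 ->
  (forall n, (n0 <= n)%N -> forall i w, C1 < p n i w) ->
  (forall n, (n0 <= n)%N -> forall (j : 'I_t) i w z,
      - (b i - a i) <= z <= b i - a i -> C2 < f n j i w z) ->
  (* Condition [2] *)
  forall (j : 'I_t) (x : 'I_d -> R), box a b x ->
  forall delta : R, 0 < delta ->
  exists nu : R, 0 < nu /\
    forall n, (n0 <= n)%N ->
    forall Q : Omega -> R,
      cond_prob_version P (G n)
        [set w | eball x delta (fun i => Y n j i w) /\ box a b (fun i => Y n j i w)] Q ->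
      {ae P, forall w, nu <= Q w}.
Proof.
move=> ab _ _ algo C1_gt0 C2_gt0 p_gt f_gt j x x_box delta delta_gt0.
exists (perturb_mass a b C1 C2 delta / 2); split.
  by rewrite divr_gt0 // perturb_mass_gt0.
move=> n n0n Q QE.
have [sG Gxs xs_box Gp step] := algo n n0n.
have [f_dens Gf BZ law Y_def] := step j.
exact: (target_event_cond_prob_ge ab sG Gxs xs_box (fun i => (Gp i).1)
  (fun i w => (f_dens i w).1) Gf (fun i => (BZ i).1) (fun i => (BZ i).2) law
  (fun i => (Y_def i).1) (fun w i => ((Y_def i).2 w).1 i)
  (fun w Ybox i => ((Y_def i).2 w).2 Ybox i) C1_gt0 C2_gt0 (p_gt n n0n)
  (f_gt n n0n j) x_box delta_gt0 Q QE).
Qed.
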